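(* Let $m,n$ be positive integers. The set $\{B_{i,j}: i\in[m], j\in[n-1]\}\cup\{C_n\}$ is a basis for the set $\Gamma_{m,n}$ of $m\times n$ stochastic matrices, i.e., it consists of $m(n-1)+1$ linearly independent stochastic matrices whose linear span contains $\Gamma_{m,n}$.
   Context: A real $m\times n$ matrix is stochastic if its entries are nonnegative and each row sums to $1$; $\Gamma_{m,n}$ is the set of such matrices (an affine set of dimension $m(n-1)$). For $i\in[m]$, $j\in[n-1]$, $B_{i,j}$ is the $m\times n$ $(0,1)$-matrix whose $(i,j)$ entry is $1$, whose $(j+1)$-th column has all entries $1$ except the $(i,j+1)$ entry which is $0$, and all of whose other entries are $0$. $C_n$ is the $m\times n$ $(0,1)$-matrix whose $n$-th column is all $1$'s and other entries $0$. *)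

From HB Require Import structures.
From mathcomp Require Import all_boot all_order all_algebra.
Set Implicit Arguments. Unset Strict Implicit. Unset Printing Implicit Defensive.
Import Order.TTheory GRing.Theory Num.Theory.
Local Open Scope ring_scope.

(* Rows/columns are 0-indexed: row i : 'I_m stands for i+1 in [m],
   j : 'I_(n.-1) stands for j+1 in [n-1]; column (j+1) of the paper is
   0-indexed column j.+1, column n is 0-indexed column n.-1. *)

Definition stochastic (R : numDomainType) (m n : nat) (A : 'M[R]_(m, n)) : Prop :=
  (forall i j, 0 <= A i j) /\ (forall i, \sum_(j < n) A i j = 1).

Definition Bmx (R : nzRingType) (m n : nat) (i : 'I_m) (j : 'I_(n.-1)) : 'M[R]_(m, n) :=
  \matrix_(k < m, l < n)
    (if (l == j :> nat) && (k == i) then 1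
     else if (l == j.+1 :> nat) && (k != i) then 1 else 0).

Definition Cmx (R : nzRingType) (m n : nat) : 'M[R]_(m, n) :=
  \matrix_(k < m, l < n) (if (l == n.-1 :> nat) then 1 else 0).

Definition stoch_family (R : nzRingType) (m n : nat) : seq 'M[R]_(m, n) :=
  [seq Bmx R i j | i <- enum 'I_m, j <- enum 'I_(n.-1)] ++ [:: Cmx R m n].

(* Every B_{i,j} and C_n has exactly one 1 in each row, hence is stochastic.
   With E_{i,j} the matrix units, B_{i,j} = E_{i,j} - E_{i,j+1} + (column j+1
   of ones), so summing over i and descending from C_n puts every all-ones
   column in the span, then every difference E_{i,j} - E_{i,j+1}, hence every
   E_{i,l} - E_{i,n}.  A matrix whose rows all sum to s is s C_n plus a
   combination of these differences.  Freeness is a dimension count: the family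
   together with the m matrices E_{i,n} spans all m x n matrices, and the two
   spans meet in C_n != 0, so dim span(family) >= mn - m + 1 = m(n-1) + 1,
   its size. *)
From mathcomp Require Import all_boot all_order all_algebra.
From mathcomp Require Import zify.
Import GRing.Theory Num.Theory.
Local Open Scope ring_scope.

(* Column indices are nats, so that the column j+1 of B_{i,j} needs no
   ordinal arithmetic; an index >= n selects no column. *)
Section Patterns.
Variables (R : nzRingType) (m n : nat).

Definition onehot_mx (c : 'I_m -> nat) : 'M[R]_(m, n) :=
  \matrix_(k < m, l < n) (l == c k :> nat)%:R.

Definition ones_col (c : nat) : 'M[R]_(m, n) := onehot_mx (fun=> c).

Definition delta_mxn (i : 'I_m) (c : nat) : 'M[R]_(m, n) :=
  \matrix_(k < m, l < n) ((k == i) && (l == c :> nat))%:R.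

Lemma delta_mxnE (i : 'I_m) (l : 'I_n) : delta_mx i l = delta_mxn i l.
Proof. by apply/matrixP => k l'; rewrite !mxE. Qed.

Lemma sum_delta_mxn (c : nat) : \sum_(i < m) delta_mxn i c = ones_col c.
Proof.
apply/matrixP => k l; rewrite summxE !mxE (bigD1 k) //= mxE eqxx big1 ?addr0 //.
by move=> i /negbTE; rewrite mxE eq_sym => ->.
Qed.

End Patterns.

Arguments ones_col {R m n}.
Arguments delta_mxn {R m n}.

Lemma onehot_mx_stochastic (R : numDomainType) m n (c : 'I_m -> nat) :
  (forall k, c k < n)%N -> stochastic (onehot_mx R m n c).
Proof.
move=> lt_cn; split=> [k l | k]; first by rewrite mxE ler0n.
under eq_bigr do rewrite mxE.
rewrite (bigD1 (Ordinal (lt_cn k))) //= eqxx big1 ?addr0 // => l.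
by rewrite -val_eqE /= => /negbTE ->.
Qed.

Lemma Bmx_onehot (R : nzRingType) m n (i : 'I_m) (j : 'I_n.-1) :
  Bmx R i j = onehot_mx R m n (fun k => if k == i then j : nat else j.+1).
Proof.
apply/matrixP => k l; rewrite !mxE.
by case: (k == i); rewrite ?andbT ?andbF /=; case: (_ == _).
Qed.

Lemma Cmx_ones_col (R : nzRingType) m n : Cmx R m n = ones_col n.-1.
Proof. by apply/matrixP => k l; rewrite !mxE; case: (_ == _). Qed.

Lemma Bmx_delta_mxn (R : nzRingType) m n (i : 'I_m) (j : 'I_n.-1) :
  Bmx R i j = delta_mxn i j - delta_mxn i j.+1 + ones_col j.+1.
Proof.
rewrite Bmx_onehot; apply/matrixP => k l; rewrite !mxE.
by case: (k == i) => /=; rewrite ?subrK // subrr add0r.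
Qed.

Lemma size_stoch_family (R : nzRingType) m n :
  size (stoch_family R m n) = (m * n.-1).+1.
Proof. by rewrite size_cat size_allpairs !size_enum_ord addn1. Qed.

Lemma stoch_family_stochastic (R : numDomainType) m n A :
  A \in stoch_family R m n.+1 -> stochastic A.
Proof.
rewrite mem_cat mem_seq1 => /orP[/allpairsP[[i j] [_ _ ->]] | /eqP->].
  rewrite Bmx_onehot; apply: onehot_mx_stochastic => k.
  by case: (k == i); [apply: leqW | ]; apply: ltn_ord j.
by rewrite Cmx_ones_col; apply: onehot_mx_stochastic.
Qed.

Section Span.
Variables (R : fieldType) (m n : nat).

Local Notation X := (stoch_family R m n.+1).
Local Notation col c := (@ones_col R m n.+1 c).
Local Notation E := (@delta_mxn R m n.+1).
Local Notation B := (@Bmx R m n.+1).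

Lemma Bmx_in_span (i : 'I_m) (j : 'I_n) : B i j \in <<X>>%VS.
Proof. by apply: memv_span; rewrite mem_cat allpairs_f ?mem_enum. Qed.

Lemma Cmx_in_span : Cmx R m n.+1 \in <<X>>%VS.
Proof. by apply: memv_span; rewrite mem_cat mem_seq1 eqxx orbT. Qed.

Lemma ones_col_in_span c : (c <= n)%N -> col c \in <<X>>%VS.
Proof.
move=> le_cn; rewrite -(subKn le_cn).
elim: (n - c)%N (leq_subr c n) => [_ | d IH lt_dn].
  by rewrite subn0 -Cmx_ones_col Cmx_in_span.
have lt_n : (n - d.+1 < n)%N by lia.
have sum_Bmx : \sum_(i < m) B i (Ordinal lt_n) =
    col (n - d.+1) - col (n - d) + col (n - d) *+ m.
  under eq_bigr do rewrite Bmx_delta_mxn.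
  by rewrite /= subnSK // big_split sumrB /= !sum_delta_mxn sumr_const card_ord.
have -> : col (n - d.+1) = \sum_(i < m) B i (Ordinal lt_n)
                           - col (n - d) *+ m + col (n - d).
  by rewrite sum_Bmx addrK subrK.
have col_in := IH (ltnW lt_dn).
by rewrite memvD // memvB ?rpredMn //; apply: memv_suml => i _; apply: Bmx_in_span.
Qed.

Lemma delta_mxnB_in_span i c : (c <= n)%N -> E i c - E i n \in <<X>>%VS.
Proof.
move=> le_cn; rewrite -opprB -(telescope_sumr _ le_cn) -sumrN big_seq.
apply: memv_suml => k; rewrite mem_index_iota => /andP[_ lt_kn].
have -> : - (E i k.+1 - E i k) = B i (Ordinal lt_kn) - col k.+1.
  by rewrite opprB Bmx_delta_mxn addrK.
by rewrite memvB ?Bmx_in_span ?ones_col_in_span.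
Qed.

Lemma const_rowsum_in_span (A : 'M[R]_(m, n.+1)) s :
  (forall i, \sum_(l < n.+1) A i l = s) -> A \in <<X>>%VS.
Proof.
move=> rowsum.
have -> : A = \sum_(i < m) \sum_(l < n.+1) A i l *: (E i l - E i n)
              + s *: Cmx R m n.+1.
  rewrite {1}(matrix_sum_delta A) Cmx_ones_col -sum_delta_mxn scaler_sumr.
  rewrite -big_split /=; apply: eq_bigr => i _.
  under [X in _ = X + _]eq_bigr do rewrite scalerBr.
  rewrite sumrB -scaler_suml rowsum subrK.
  by apply: eq_bigr => l _; rewrite delta_mxnE.
rewrite memvD ?memvZ ?Cmx_in_span //.
by do 2!apply: memv_suml => ? _; rewrite memvZ // delta_mxnB_in_span // -ltnS.
Qed.

Lemma stoch_family_free : (0 < m)%N -> free X.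
Proof.
move=> m_gt0; set Z := [seq E i n | i <- enum 'I_m].
have E_in_Z i : E i n \in <<Z>>%VS by apply/memv_span/map_f; rewrite mem_enum.
have span_XZ : (<<X>> + <<Z>>)%VS = fullv.
  apply/eqP; rewrite eqEsubv subvf; apply/subvP => A _.
  rewrite (matrix_sum_delta A); apply: memv_suml => i _.
  apply: memv_suml => l _; apply: memvZ.
  rewrite delta_mxnE -(subrK (E i n) (E i l)).
  by rewrite memv_add ?delta_mxnB_in_span // -ltnS.
have C_in_Z : Cmx R m n.+1 \in <<Z>>%VS.
  by rewrite Cmx_ones_col -sum_delta_mxn; apply: memv_suml => i _.
have C_neq0 : Cmx R m n.+1 != 0.
  apply/eqP => /matrixP/(_ (Ordinal m_gt0) ord_max)/eqP.
  by rewrite !mxE eqxx oner_eq0.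
have dim_cap : (0 < \dim (<<X>> :&: <<Z>>))%N.
  have C_cap : (<[Cmx R m n.+1]> <= <<X>> :&: <<Z>>)%VS.
    by rewrite -memvE memv_cap Cmx_in_span C_in_Z.
  by apply: leq_trans (dimvS C_cap); rewrite dim_vline C_neq0.
have := dimv_sum_cap <<X>> <<Z>>; rewrite span_XZ dimvf dim_matrix.
have := dim_span X; have := dim_span Z.
rewrite /free size_stoch_family size_map size_enum_ord /= => dimZ dimX dim_sum.
by apply/eqP; nia.
Qed.

End Span.

Theorem mainTheorem8 (R : realFieldType) (m n : nat) (hm : (0 < m)%N) (hn : (0 < n)%N) :
  size (stoch_family R m n) = (m * n.-1).+1 /\
  (forall A, A \in stoch_family R m n -> stochastic A) /\
  free (stoch_family R m n) /\
  (forall A : 'M[R]_(m, n), stochastic A -> A \in <<stoch_family R m n>>%VS).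
Proof.
case: n hn => // n _.
split; first exact: size_stoch_family.
split; first exact: stoch_family_stochastic.
split; first exact: stoch_family_free.
by move=> A [_ rowsum]; apply: const_rowsum_in_span rowsum.
Qed.
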